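(* Let $G$ and $H$ be cyclically orderable graphs with $|V(G)|=|V(H)|$ and $|E(G)|=|E(H)|$. Then for any $u\in V(G)$ and $v\in V(H)$, the series composition $G\oplus H$ obtained by gluing $u$ and $v$ is cyclically orderable.
   Context: A cyclic base ordering (CBO) of a connected graph $G$ is a bijection $\mathcal{O}:E(G)\to\{1,\dots,|E(G)|\}$ such that for every $i\in\{1,\dots,|E(G)|\}$ the edges $\mathcal{O}^{-1}(i),\dots,\mathcal{O}^{-1}(i+|V(G)|-2)$ (indices taken cyclically modulo $|E(G)|$) induce a spanning tree of $G$; $G$ is cyclically orderable if it has a CBO. Given graphs $G$ and $H$ (vertex-disjoint) with $u\in V(G)$ and $v\in V(H)$, the series composition (1-sum) $G\oplus H$ is the graph obtained from the disjoint union of $G$ and $H$ by identifying $u$ and $v$ into a single vertex. *)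

(* Graphs are finite multigraphs (loops allowed in the
   representation; a loop can never lie in a spanning tree). *)
From mathcomp Require Import all_boot.
Set Implicit Arguments. Unset Strict Implicit. Unset Printing Implicit Defensive.

Section Graphs.
Variables (V E : finType) (ends : E -> V * V).

Definition adjF (F : {set E}) : rel V :=
  fun x y => [exists e in F, (ends e == (x, y)) || (ends e == (y, x))].

Definition connectedF (F : {set E}) : bool :=
  [forall x, forall y, connect (adjF F) x y].

Definition acyclicF (F : {set E}) : bool :=
  [forall e in F, ~~ connect (adjF (F :\ e)) (ends e).1 (ends e).2].

Definition spanning_tree (F : {set E}) : bool := connectedF F && acyclicF F.

Definition connected_graph : bool := connectedF [set: E].

(* The window of |V|-1 cyclically consecutive positions starting at position i
   (positions 0..m-1 here instead of 1..m). *)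
Definition cbo_window (O : E -> 'I_#|E|) (i : 'I_#|E|) : {set E} :=
  [set e | (O e + #|E| - i) %% #|E| < #|V|.-1].

Definition is_CBO (O : E -> 'I_#|E|) : Prop :=
  bijective O /\ forall i : 'I_#|E|, spanning_tree (cbo_window O i).

Definition cyclically_orderable : Prop :=
  connected_graph /\ exists O : E -> 'I_#|E|, is_CBO O.
End Graphs.

(* Series composition (1-sum): disjoint union of G and H with u and v
   identified. Vertex set: V(G) + (V(H) \ {v}); v is mapped to u. *)
Section Glue.
Variables (V1 E1 V2 E2 : finType) (ends1 : E1 -> V1 * V1)
          (ends2 : E2 -> V2 * V2) (u : V1) (v : V2).

Definition glueV : finType := (V1 + {x : V2 | x != v})%type.

Definition glue_map2 (x : V2) : glueV :=
  match insub x with Some y => inr y | None => inl u end.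

Definition glue_ends (e : (E1 + E2)%type) : glueV * glueV :=
  match e with
  | inl e1 => (inl (ends1 e1).1, inl (ends1 e1).2)
  | inr e2 => (glue_map2 (ends2 e2).1, glue_map2 (ends2 e2).2)
  end.
End Glue.

From mathcomp Require Import all_boot zify.
Set Implicit Arguments. Unset Strict Implicit. Unset Printing Implicit Defensive.

(* Interleave the two cyclic base orderings: edges of G take the even
   positions 2k, edges of H the odd positions 2k+1.  Since G (+) H has 2n-1
   vertices (n = |V(G)| = |V(H)|), a window of the interleaved order has
   2(n-1) edges, namely n-1 consecutive edges of each ordering, i.e. a spanning
   tree of G and a spanning tree of H.  Glued at the cut vertex they form a
   spanning tree of G (+) H: connectivity goes through the cut vertex, and a
   cycle would project, by collapsing the other side onto the cut vertex, to a
   cycle of G or of H. *)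

Lemma homo_connect (A B : finType) (f : A -> B) (e : rel A) (e' : rel B) :
  (forall x y, e x y -> connect e' (f x) (f y)) ->
  forall x y, connect e x y -> connect e' (f x) (f y).
Proof.
move=> fe x y /connectP [p]; elim: p x => [|z p IHp] x /=; first by move=> _ ->.
by case/andP=> /fe exz pz /(IHp _ pz); apply: connect_trans.
Qed.

Lemma inj_preimsetD1 (A B : finType) (f : A -> B) (S : {set B}) x :
  injective f -> f @^-1: (S :\ f x) = f @^-1: S :\ x.
Proof. by move=> f_inj; apply/setP=> y; rewrite !inE (inj_eq f_inj). Qed.

Section Adjacency.
Variables (V E : finType) (ends : E -> V * V) (F : {set E}).

Lemma adjFP x y :
  reflect (exists2 e, e \in F & ends e = (x, y) \/ ends e = (y, x))
          (adjF ends F x y).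
Proof.
apply: (iffP existsP) => [[e /andP [eF /orP [] /eqP]]|[e eF [] ends_e]].
- by exists e => //; left.
- by exists e => //; right.
- by exists e; rewrite eF ends_e eqxx.
- by exists e; rewrite eF ends_e eqxx orbT.
Qed.

Lemma adjF_ends e : e \in F ->
  adjF ends F (ends e).1 (ends e).2 /\ adjF ends F (ends e).2 (ends e).1.
Proof.
by move=> eF; split; apply/adjFP; exists e => //; rewrite -surjective_pairing; [left|right].
Qed.

End Adjacency.

Section Glue.
Variables (V1 E1 V2 E2 : finType) (ends1 : E1 -> V1 * V1)
          (ends2 : E2 -> V2 * V2) (u : V1) (v : V2).
Local Notation ends := (glue_ends ends1 ends2 u v).
Local Notation map2 := (glue_map2 u v).

Definition glue_proj1 (x : glueV V1 v) : V1 := if x is inl a then a else u.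
Definition glue_proj2 (x : glueV V1 v) : V2 := if x is inr y then val y else v.

Lemma glue_map2_val (y : {x : V2 | x != v}) : map2 (val y) = inr y.
Proof. by rewrite /glue_map2 valK. Qed.

Lemma glue_map2_v : map2 v = inl u.
Proof. by rewrite /glue_map2 insubF // eqxx. Qed.

Lemma glue_proj1_map2 x : glue_proj1 (map2 x) = u.
Proof. by rewrite /glue_map2; case: insubP. Qed.

Lemma glue_proj2_map2 x : glue_proj2 (map2 x) = x.
Proof. by rewrite /glue_map2; case: insubP => [y _ <- // | /negbNE/eqP ->]. Qed.

Section GlueEdges.
Variable F : {set E1 + E2}.
Local Notation F1 := (inl @^-1: F).
Local Notation F2 := (inr @^-1: F).

Lemma adjF_glue_inl x y : adjF ends1 F1 x y -> adjF ends F (inl x) (inl y).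
Proof.
case/adjFP=> e; rewrite inE => eF ends_e; apply/adjFP; exists (inl e) => //=.
by case: ends_e => ->; [left|right].
Qed.

Lemma adjF_glue_inr x y : adjF ends2 F2 x y -> adjF ends F (map2 x) (map2 y).
Proof.
case/adjFP=> e; rewrite inE => eF ends_e; apply/adjFP; exists (inr e) => //=.
by case: ends_e => ->; [left|right].
Qed.

Lemma adjF_glue_proj1 x y :
  adjF ends F x y -> connect (adjF ends1 F1) (glue_proj1 x) (glue_proj1 y).
Proof.
case/adjFP=> [[e|e] eF [] [<- <-]] /=; rewrite ?glue_proj1_map2 //;
  apply: connect1; have [] := adjF_ends ends1 (_ : e \in F1); by rewrite ?inE.
Qed.

Lemma adjF_glue_proj2 x y :
  adjF ends F x y -> connect (adjF ends2 F2) (glue_proj2 x) (glue_proj2 y).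
Proof.
case/adjFP=> [[e|e] eF [] [<- <-]] /=; rewrite ?glue_proj2_map2 //;
  apply: connect1; have [] := adjF_ends ends2 (_ : e \in F2); by rewrite ?inE.
Qed.

Lemma connectedF_glue :
  connectedF ends1 F1 -> connectedF ends2 F2 -> connectedF ends F.
Proof.
move=> /forallP conn1 /forallP conn2.
have conn_inl a b : connect (adjF ends F) (inl a) (inl b).
  apply: (homo_connect (f := inl)) (forallP (conn1 a) b) => x y.
  by move/adjF_glue_inl/connect1.
have conn_inr a b : connect (adjF ends F) (map2 a) (map2 b).
  apply: homo_connect (forallP (conn2 a) b) => x y.
  by move/adjF_glue_inr/connect1.
have conn_u x : connect (adjF ends F) x (inl u) /\ connect (adjF ends F) (inl u) x.
  case: x => [a|y]; first by rewrite !conn_inl.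
  by rewrite -glue_map2_val -glue_map2_v !conn_inr.
apply/forallP=> x; apply/forallP=> y.
by apply: connect_trans (proj1 (conn_u x)) (proj2 (conn_u y)).
Qed.

End GlueEdges.

Lemma acyclicF_glue (F : {set E1 + E2}) :
  acyclicF ends1 (inl @^-1: F) -> acyclicF ends2 (inr @^-1: F) -> acyclicF ends F.
Proof.
move=> /forallP acyc1 /forallP acyc2; apply/forallP=> -[e|e]; apply/implyP => eF.
- move/implyP: (acyc1 e); rewrite inE => /(_ eF); apply: contra => /=.
  rewrite -(inj_preimsetD1 _ _ (@inl_inj _ _)).
  exact: (homo_connect (@adjF_glue_proj1 _)).
- move/implyP: (acyc2 e); rewrite inE => /(_ eF); apply: contra => /=.
  rewrite -(inj_preimsetD1 _ _ (@inr_inj _ _)).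
  by move/(homo_connect (@adjF_glue_proj2 _)); rewrite !glue_proj2_map2.
Qed.

Lemma spanning_tree_glue (F : {set E1 + E2}) :
  spanning_tree ends1 (inl @^-1: F) -> spanning_tree ends2 (inr @^-1: F) ->
  spanning_tree ends F.
Proof.
case/andP=> conn1 acyc1 /andP [conn2 acyc2].
by rewrite /spanning_tree connectedF_glue ?acyclicF_glue.
Qed.

End Glue.

Lemma modn_double_add x m b : b < 2 -> (x.*2 + b) %% m.*2 = (x %% m).*2 + b.
Proof.
move=> b_lt2; have [->|m_gt0] := posnP m; first by rewrite !modn0.
rewrite {1}(divn_eq x m) doubleD doubleMr -addnA modnMDl modn_small //.
by have := ltn_pmod x m_gt0; lia.
Qed.

Lemma modnDBmr a m i : i <= m -> (a + m - i %% m) %% m = (a + m - i) %% m.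
Proof.
rewrite leq_eqVlt => /orP [/eqP ->|i_lt_m]; last by rewrite (modn_small i_lt_m).
by rewrite modnn subn0 addnK modnDr.
Qed.

Section DoubleWindow.
Variables (m k a j : nat) (c : bool).
Hypothesis j_lt_m : j < m.

(* For an odd start 2j+1 the even positions of the window begin at 2(j+1),
   hence the G-window starts at (j + c) %% m. *)
Lemma window_double_even :
  ((a.*2 + m.*2 - (j.*2 + c)) %% m.*2 < k.*2) = ((a + m - (j + c) %% m) %% m < k).
Proof.
have -> : a.*2 + m.*2 - (j.*2 + c) = (a + m - (j + c)).*2 + c by case: c => /=; lia.
rewrite modn_double_add ?modnDBmr; last 2 first.
- by case: c => /=; lia.
- by case: c.
by set r := _ %% m; case: c => /=; apply/idP/idP; lia.
Qed.

Lemma window_double_odd :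
  ((a.*2.+1 + m.*2 - (j.*2 + c)) %% m.*2 < k.*2) = ((a + m - j) %% m < k).
Proof.
have -> : a.*2.+1 + m.*2 - (j.*2 + c) = (a + m - j).*2 + (1 - c) by case: c => /=; lia.
rewrite modn_double_add; last by case: c.
by set r := _ %% m; case: c => /=; apply/idP/idP; lia.
Qed.

End DoubleWindow.

Section Interleave.
Variables (E1 E2 : finType) (O1 : E1 -> 'I_#|E1|) (O2 : E2 -> 'I_#|E2|).
Hypothesis eqE : #|E1| = #|E2|.

Lemma card_sum_double : #|{: E1 + E2}| = #|E1|.*2.
Proof. by rewrite card_sum -eqE addnn. Qed.

Definition interleave (e : E1 + E2) : nat :=
  match e with inl a => (O1 a).*2 | inr b => (O2 b).*2.+1 end.

Lemma interleave_lt e : interleave e < #|{: E1 + E2}|.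
Proof.
by rewrite card_sum_double; case: e => [a|b] /=; rewrite ?ltn_double ?ltn_Sdouble ?eqE.
Qed.

Definition interleave_ord (e : E1 + E2) : 'I_#|{: E1 + E2}| :=
  Ordinal (interleave_lt e).

Lemma interleave_bij : bijective O1 -> bijective O2 -> bijective interleave_ord.
Proof.
move=> /bij_inj O1_inj /bij_inj O2_inj.
apply: inj_card_bij; last by rewrite card_ord.
move=> [a|b] [a'|b'] /(congr1 val) /= eq_pos; try lia.
- by rewrite (O1_inj a a') //; apply/val_inj/double_inj.
- by rewrite (O2_inj b b') //; apply/val_inj/double_inj/succn_inj.
Qed.

Lemma cbo_window_interleave (V1 V2 : finType) (u : V1) (v : V2)
    (i : 'I_#|{: E1 + E2}|) :
  #|V1| = #|V2| ->
  exists j1 j2,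
    inl @^-1: cbo_window (glueV V1 v) interleave_ord i = cbo_window V1 O1 j1 /\
    inr @^-1: cbo_window (glueV V1 v) interleave_ord i = cbo_window V2 O2 j2.
Proof.
move=> eqV.
have i_eq : val i = i./2.*2 + odd i by rewrite addnC odd_double_half.
have j_lt1 : i./2 < #|E1| by rewrite ltn_half_double -card_sum_double.
move: (i./2) (odd i) i_eq j_lt1 => j b i_eq j_lt1.
have j_lt2 : j < #|E2| by rewrite -eqE.
have m_gt0 : 0 < #|E1| by lia.
have cardV : #|glueV V1 v|.-1 = (#|V1|.-1).*2.
  have : 0 < #|V1| by apply/card_gt0P; exists u.
  by rewrite card_sum card_sig cardC1 -eqV; lia.
exists (Ordinal (ltn_pmod (j + b) m_gt0)), (Ordinal j_lt2).
split; apply/setP=> e; rewrite !inE /= cardV i_eq card_sum_double.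
- exact: window_double_even.
- by rewrite window_double_odd // eqE eqV.
Qed.

End Interleave.

Theorem mainTheorem3 (V1 E1 V2 E2 : finType)
    (ends1 : E1 -> V1 * V1) (ends2 : E2 -> V2 * V2) :
  cyclically_orderable ends1 -> cyclically_orderable ends2 ->
  #|V1| = #|V2| -> #|E1| = #|E2| ->
  forall (u : V1) (v : V2),
    cyclically_orderable (glue_ends ends1 ends2 u v).
Proof.
move=> [conn1 [O1 [bij1 tree1]]] [conn2 [O2 [bij2 tree2]]] eqV eqE u v.
split; first by apply: connectedF_glue; rewrite preimsetT.
exists (interleave_ord O1 O2 eqE); split; first exact: interleave_bij.
move=> i; have [j1 [j2 [win1 win2]]] := cbo_window_interleave O1 O2 eqE u v i eqV.
by apply: spanning_tree_glue; rewrite ?win1 ?win2.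
Qed.
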